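(* If $Q$ is a Jordan loop and $x\in Q$, then $x^3$, $x^4$ and $x^5$ are well-defined.
   Context: A loop is a set $Q$ with a binary operation (juxtaposition) and neutral element $e$ such that for all $a,b$ the equations $ax=b$, $ya=b$ have unique solutions. A Jordan loop is a commutative loop satisfying $x^2(yx)=(x^2y)x$. For $k\ge 0$, $x^k$ denotes the right-associated product $L_x^k(e)=x(x(\cdots(xe)\cdots))$ with $k$ factors $x$ (so $x^0=e$). We say $x^k$ is well-defined if every way of bracketing a product of $k$ copies of $x$ gives the same value. *)

From Stdlib Require Import Arith.

Definition is_loop {Q : Type} (op : Q -> Q -> Q) (e : Q) : Prop :=
  (forall a, op e a = a /\ op a e = a) /\
  (forall a b, exists! x, op a x = b) /\
  (forall a b, exists! y, op y a = b).

Definition is_jordan_loop {Q : Type} (op : Q -> Q -> Q) (e : Q) : Prop :=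
  is_loop op e /\
  (forall a b, op a b = op b a) /\
  (forall x y, op (op x x) (op y x) = op (op (op x x) y) x).

Inductive bracketing : Type :=
| BLeaf : bracketing
| BNode : bracketing -> bracketing -> bracketing.

Fixpoint nleaves (t : bracketing) : nat :=
  match t with
  | BLeaf => 1
  | BNode l r => nleaves l + nleaves r
  end.

Fixpoint beval {Q : Type} (op : Q -> Q -> Q) (x : Q) (t : bracketing) : Q :=
  match t with
  | BLeaf => x
  | BNode l r => op (beval op x l) (beval op x r)
  end.

Definition lpow {Q : Type} (op : Q -> Q -> Q) (e x : Q) (k : nat) : Q :=
  Nat.iter k (op x) e.

Definition pow_well_defined {Q : Type} (op : Q -> Q -> Q) (x : Q) (k : nat) : Prop :=
  forall t1 t2 : bracketing, nleaves t1 = k -> nleaves t2 = k ->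
    beval op x t1 = beval op x t2.

(* If elements p k satisfy p 1 = x and p i * p j = p (i + j) whenever i + j <= n,
   induction on the bracketing shows that every product of k <= n copies of x
   equals p k.  For the right powers x^k of a commutative loop this additivity
   up to 5 reduces, by commutativity, to x^2 x^2 = x^4 and x^2 x^3 = x^5, which
   are the Jordan identity with y = x and y = x^2. *)
From Stdlib Require Import Arith Lia.

Section Bracketings.
Variables (Q : Type) (op : Q -> Q -> Q) (x : Q) (p : nat -> Q) (n : nat).
Hypothesis p_1 : p 1 = x.
Hypothesis p_add :
  forall i j, 1 <= i -> 1 <= j -> i + j <= n -> op (p i) (p j) = p (i + j).

Lemma nleaves_pos (t : bracketing) : 1 <= nleaves t.
Proof. induction t; simpl; lia. Qed.

Lemma beval_eq_of_pow_add (t : bracketing) :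
  nleaves t <= n -> beval op x t = p (nleaves t).
Proof.
  induction t as [|l IHl r IHr]; simpl; intros Hn.
  - now rewrite p_1.
  - pose proof (nleaves_pos l); pose proof (nleaves_pos r).
    rewrite IHl, IHr by lia.
    apply p_add; lia.
Qed.

Lemma pow_well_defined_of_pow_add (k : nat) :
  k <= n -> pow_well_defined op x k.
Proof.
  intros Hk t1 t2 H1 H2.
  rewrite !beval_eq_of_pow_add by lia.
  now rewrite H1, H2.
Qed.

End Bracketings.

Section JordanPowers.
Variables (Q : Type) (op : Q -> Q -> Q) (e x : Q).
Hypothesis opC : forall a b, op a b = op b a.
Hypothesis jordan : forall a b, op (op a a) (op b a) = op (op (op a a) b) a.
Hypothesis x_e : op x e = x.

Local Notation pw k := (lpow op e x k).

Lemma lpow_1 : pw 1 = x.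
Proof. exact x_e. Qed.

Lemma lpow_add_1 (j : nat) : op (pw 1) (pw j) = pw (1 + j).
Proof. now rewrite lpow_1. Qed.

Lemma lpow_2 : pw 2 = op x x.
Proof. exact (f_equal (op x) lpow_1). Qed.

Lemma lpow_add_2_2 : op (pw 2) (pw 2) = pw 4.
Proof.
  change (op (pw 2) (pw 2) = op x (op x (pw 2))).
  rewrite lpow_2, jordan.
  now rewrite opC, (opC (op x x) x).
Qed.

Lemma lpow_add_2_3 : op (pw 2) (pw 3) = pw 5.
Proof.
  change (pw 3) with (op x (pw 2)).
  rewrite (opC x), lpow_2, jordan, <- lpow_2, lpow_add_2_2.
  now rewrite opC.
Qed.

Lemma lpow_add_le5 (i j : nat) :
  1 <= i -> 1 <= j -> i + j <= 5 -> op (pw i) (pw j) = pw (i + j).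
Proof.
  assert (Hsorted : forall i j, 1 <= i <= j -> i + j <= 5 ->
                      op (pw i) (pw j) = pw (i + j)).
  { intros i' j' Hij Hs.
    destruct (Nat.eq_dec i' 1) as [->|]; [apply lpow_add_1|].
    replace i' with 2 by lia.
    destruct (Nat.eq_dec j' 2) as [->|]; [apply lpow_add_2_2|].
    replace j' with 3 by lia.
    apply lpow_add_2_3. }
  intros Hi Hj Hs.
  destruct (Nat.le_ge_cases i j).
  - apply Hsorted; lia.
  - rewrite opC, Nat.add_comm. apply Hsorted; lia.
Qed.

End JordanPowers.

Theorem lemma2p1 (Q : Type) (op : Q -> Q -> Q) (e : Q)
  (HQ : is_jordan_loop op e) (x : Q) :
  pow_well_defined op x 3 /\ pow_well_defined op x 4 /\ pow_well_defined op x 5.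
Proof.
  destruct HQ as [[Hunit _] [opC jordan]].
  assert (Hwd : forall k, k <= 5 -> pow_well_defined op x k).
  { apply (pow_well_defined_of_pow_add Q op x (lpow op e x) 5).
    - exact (lpow_1 Q op e x (proj2 (Hunit x))).
    - exact (lpow_add_le5 Q op e x opC jordan (proj2 (Hunit x))). }
  repeat split; apply Hwd; lia.
Qed.
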